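(* For every integer $m\geq 1$, \[ \mathcal{I}_m=\big\{(i,j,t,p)\in\mathbb{Z}^4 \;\big|\; 0\leq i,j\leq m,\ \max\{i+j-m,\ m-1-i-j\}\leq t\leq m-|i-j|,\ \max\{0,\ i+j-m,\ i+t-m,\ j+t-m\}\leq p\leq \min\{i,\ j,\ t,\ i+j+t+1-m\}\big\}. \] Moreover, $|\mathcal{I}_m|=\binom{m+4}{4}$.
   Context: Let $m$ be a positive integer, $S=\{1,2,\ldots,2m+1\}$, and let $X$ be the set of all $m$-element subsets of $S$. For an ordered triple $(x,y,z)\in X\times X\times X$ define $\partial(x,y,z):=(|x\cap y|,\ |x\cap z|,\ |y\cap z|,\ |x\cap y\cap z|)$. Let $\mathcal{I}_m$ denote the set of all four-tuples $(i,j,t,p)$ such that $\partial(x,y,z)=(i,j,t,p)$ for some $x,y,z\in X$. *)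

From mathcomp Require Import all_boot all_order all_algebra.
Set Implicit Arguments. Unset Strict Implicit. Unset Printing Implicit Defensive.
Import Order.TTheory GRing.Theory Num.Theory.

(* S = {1,...,2m+1} is modelled by 'I_(2m+1) = {0,...,2m}. *)
Definition Xsets (m : nat) : {set {set 'I_(2 * m + 1)}} :=
  [set x : {set 'I_(2 * m + 1)} | #|x| == m].

Definition in_Im (m : nat) (i j t p : int) : Prop :=
  exists x y z : {set 'I_(2 * m + 1)},
    [/\ x \in Xsets m, y \in Xsets m, z \in Xsets m &
     [/\ (Posz #|x :&: y| = i), (Posz #|x :&: z| = j), (Posz #|y :&: z| = t)
       & (Posz #|x :&: y :&: z| = p)]].

(* I_m as a finite set; all its tuples lie in [0,m]^4 since every
   intersection of m-sets has at most m elements. *)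
Definition Imset (m : nat) :
  {set 'I_m.+1 * 'I_m.+1 * 'I_m.+1 * 'I_m.+1} :=
  [set q : 'I_m.+1 * 'I_m.+1 * 'I_m.+1 * 'I_m.+1 | [exists x in Xsets m, exists y in Xsets m, exists z in Xsets m,
     [&& #|x :&: y| == val q.1.1.1, #|x :&: z| == val q.1.1.2,
         #|y :&: z| == val q.1.2 & #|x :&: y :&: z| == val q.2]]].

Local Open Scope ring_scope.

Definition Icond (m : nat) (i j t p : int) : bool :=
  [&& 0 <= i <= (Posz m), 0 <= j <= (Posz m),
      Num.max (i + j - (Posz m)) ((Posz m) - 1 - i - j) <= t,
      t <= (Posz m) - `|i - j|,
      Num.max (Num.max 0 (i + j - (Posz m))) (Num.max (i + t - (Posz m)) (j + t - (Posz m))) <= p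
    & p <= Num.min (Num.min i j) (Num.min t (i + j + t + 1 - (Posz m)))].

From mathcomp Require Import all_boot all_order all_algebra zify.
Set Implicit Arguments.
Unset Strict Implicit.
Unset Printing Implicit Defensive.

(* Three subsets of a finite universe are described, up to relabelling, by the
   sizes of their seven Venn regions, and these can be any natural numbers whose
   total does not exceed the size of the universe.  Expressing the regions through
   the intersection numbers (i, j, t, p) turns this into the inequalities defining
   I_m.  For the count, I_m is put in bijection with the 4-tuples of naturals of sum
   at most m, which are counted by C(m + 4, 4). *)

(* [a], [b], [c] are the sizes of three sets in a universe of size [n], [i], [j],
   [t] their pairwise and [p] their triple intersection numbers. *)
Definition venn_cond (n a b c i j t p : nat) : bool :=
  [&& p <= i, p <= j, p <= t, i + j <= a + p, i + t <= b + p, j + t <= c + p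
    & a + b + c + p <= n + i + j + t].

Section VennCardinalities.

Variable T : finType.
Implicit Types A B C : {set T}.

Lemma leq_card_setI2 A B C :
  #|A :&: B| + #|A :&: C| <= #|A| + #|A :&: B :&: C|.
Proof.
rewrite -setIA setIIr -cardsUI -setIUr leq_add2r.
by rewrite subset_leq_card ?subsetIl.
Qed.

Lemma card_setU3 A B C :
  #|A :|: B :|: C| + (#|A :&: B| + #|A :&: C| + #|B :&: C|) =
  #|A| + #|B| + #|C| + #|A :&: B :&: C|.
Proof.
have UC := cardsUI (A :|: B) C; have UAB := cardsUI A B.
have := cardsUI (A :&: C) (B :&: C).
rewrite -setIUl setIACA setIid -setIA [B :&: C]setIC setIA setIAC => UI.
lia.
Qed.

Lemma venn_cond_card A B C :
  venn_cond #|T| #|A| #|B| #|C|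
    #|A :&: B| #|A :&: C| #|B :&: C| #|A :&: B :&: C|.
Proof.
have le_I3 (D E F : {set T}) : #|D :&: E :&: F| <= #|D :&: E|.
  by rewrite subset_leq_card ?subsetIl.
have := leq_card_setI2 A B C; have := leq_card_setI2 B A C; have := leq_card_setI2 C A B.
have := le_I3 A B C; have := le_I3 A C B; have := le_I3 B C A.
have := card_setU3 A B C; have := max_card (A :|: B :|: C).
rewrite !(setIC B A) !(setIC C A) !(setIC C B) (setIAC A C B) (setIAC B C A) -(setIC B A).
rewrite /venn_cond; lia.
Qed.

End VennCardinalities.

Definition segment n (lo len : nat) : {set 'I_n} := [set k : 'I_n | lo <= k < lo + len].

Lemma card_segment n lo len : lo + len <= n -> #|segment n lo len| = len.
Proof.
move=> le_n; rewrite -sum1dep_card.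
transitivity (\sum_(lo <= k < lo + len) 1); last by rewrite sum_nat_const_nat addKn muln1.
rewrite (big_nat_widen _ _ _ _ _ le_n) big_geq_mkord.
by apply: eq_bigl => k; rewrite andbC.
Qed.

Lemma card_segmentU n lo1 len1 lo2 len2 : lo1 + len1 <= lo2 -> lo2 + len2 <= n ->
  #|segment n lo1 len1 :|: segment n lo2 len2| = len1 + len2.
Proof.
move=> le1 le2; have := cardsUI (segment n lo1 len1) (segment n lo2 len2).
have -> : segment n lo1 len1 :&: segment n lo2 len2 = set0.
  by apply/setP => k; rewrite !inE; apply/negbTE; lia.
by rewrite cards0 addn0 !card_segment //; lia.
Qed.

(* The regions are laid out consecutively in the order A, AC, ABC, AB, B, BC, C,
   so that A and B are segments and C is the union of two. *)
Lemma venn_sets_from_regions n rA rAC rABC rAB rB rBC rC :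
    rA + rAC + rABC + rAB + rB + rBC + rC <= n ->
  exists A B C : {set 'I_n},
  [/\ #|A| = rA + rAC + rABC + rAB, #|B| = rABC + rAB + rB + rBC,
       #|C| = rAC + rABC + rBC + rC &
   [/\ #|A :&: B| = rABC + rAB, #|A :&: C| = rAC + rABC,
       #|B :&: C| = rABC + rBC & #|A :&: B :&: C| = rABC]].
Proof.
move=> le_n.
set A := segment n 0 (rA + rAC + rABC + rAB).
set B := segment n (rA + rAC) (rABC + rAB + rB + rBC).
set C := segment n rA (rAC + rABC) :|: segment n (rA + rAC + rABC + rAB + rB) (rBC + rC).
have AB : A :&: B = segment n (rA + rAC) (rABC + rAB).
  by apply/setP => k; rewrite !inE; apply/idP/idP; lia.
have AC : A :&: C = segment n rA (rAC + rABC).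
  by apply/setP => k; rewrite !inE; apply/idP/idP; lia.
have BC : B :&: C = segment n (rA + rAC) rABC :|: segment n (rA + rAC + rABC + rAB + rB) rBC.
  by apply/setP => k; rewrite !inE; apply/idP/idP; lia.
have ABC : A :&: B :&: C = segment n (rA + rAC) rABC.
  by apply/setP => k; rewrite !inE; apply/idP/idP; lia.
exists A, B, C; rewrite ABC AB AC BC !card_segmentU ?card_segment; try lia.
by rewrite !addnA.
Qed.

Lemma venn_cond_realizable n a b c i j t p : venn_cond n a b c i j t p ->
  exists A B C : {set 'I_n},
    [/\ #|A| = a, #|B| = b, #|C| = c &
     [/\ #|A :&: B| = i, #|A :&: C| = j, #|B :&: C| = t & #|A :&: B :&: C| = p]].
Proof.
rewrite /venn_cond => cond.
have [rAB ?] : exists r, i = p + r by exists (i - p); lia.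
have [rAC ?] : exists r, j = r + p by exists (j - p); lia.
have [rBC ?] : exists r, t = p + r by exists (t - p); lia.
have [rA ?] : exists r, a = r + rAC + p + rAB by exists (a - (rAC + p + rAB)); lia.
have [rB ?] : exists r, b = p + rAB + r + rBC by exists (b - (p + rAB + rBC)); lia.
have [rC ?] : exists r, c = rAC + p + rBC + r by exists (c - (rAC + p + rBC)); lia.
subst i j t a b c.
have [|A [B [C cards]]] := @venn_sets_from_regions n rA rAC p rAB rB rBC rC; first lia.
by exists A, B, C.
Qed.

Lemma Xsets_realizable m (i j t p : nat) :
  (exists x y z : {set 'I_(2 * m + 1)},
    [/\ x \in Xsets m, y \in Xsets m, z \in Xsets m &
     [/\ #|x :&: y| = i, #|x :&: z| = j, #|y :&: z| = t & #|x :&: y :&: z| = p]])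
  <-> venn_cond (2 * m + 1) m m m i j t p.
Proof.
split=> [[x [y [z [Xx Xy Xz [<- <- <- <-]]]]] | /venn_cond_realizable].
  by move: Xx Xy Xz (venn_cond_card x y z); rewrite !inE card_ord => /eqP-> /eqP-> /eqP->.
case=> x [y [z [cx cy cz cards]]].
by exists x, y, z; rewrite !inE cx cy cz eqxx.
Qed.

Lemma Icond_venn_cond m (i j t p : nat) :
  Icond m i j t p = venn_cond (2 * m + 1) m m m i j t p.
Proof. by rewrite /Icond /venn_cond; apply/idP/idP; lia. Qed.

Lemma in_Im_Icond m i j t p : in_Im m i j t p <-> Icond m i j t p.
Proof.
split=> [[x [y [z [Xx Xy Xz [<- <- <- <-]]]]] | cond].
  by rewrite Icond_venn_cond; apply/Xsets_realizable; exists x, y, z.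
have [i0 j0 t0 p0] : [/\ 0 <= i, 0 <= j, 0 <= t & 0 <= p]%R by rewrite /Icond in cond; split; lia.
move: cond; rewrite -(gez0_abs i0) -(gez0_abs j0) -(gez0_abs t0) -(gez0_abs p0).
rewrite Icond_venn_cond => /Xsets_realizable[x [y [z [Xx Xy Xz [e1 e2 e3 e4]]]]].
by exists x, y, z; rewrite e1 e2 e3 e4.
Qed.

Lemma mem_Imset m (q : 'I_m.+1 * 'I_m.+1 * 'I_m.+1 * 'I_m.+1) :
  (q \in Imset m) = venn_cond (2 * m + 1) m m m q.1.1.1 q.1.1.2 q.1.2 q.2.
Proof.
rewrite inE; apply/idP/idP.
  case/exists_inP=> x Xx /exists_inP[y Xy /exists_inP[z Xz]].
  by case/and4P=> /eqP e1 /eqP e2 /eqP e3 /eqP e4; apply/Xsets_realizable; exists x, y, z.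
case/Xsets_realizable=> x [y [z [Xx Xy Xz [e1 e2 e3 e4]]]].
apply/exists_inP; exists x => //; apply/exists_inP; exists y => //.
by apply/exists_inP; exists z; rewrite // e1 e2 e3 e4 !eqxx.
Qed.

Lemma tuple4P T (u : 4.-tuple T) : exists u0 u1 u2 u3, u = [tuple u0; u1; u2; u3].
Proof.
case: u => [[|u0 [|u1 [|u2 [|u3 [|? ?]]]]] //= size_u].
by exists u0, u1, u2, u3; apply: val_inj.
Qed.

Section Counting.

Variable m : nat.

Local Notation quad := ('I_m.+1 * 'I_m.+1 * 'I_m.+1 * 'I_m.+1)%type.

Definition bounded_tuples : {set 4.-tuple 'I_m.+1} :=
  [set u : 4.-tuple 'I_m.+1 | \sum_(k <- u) k <= m].

(* With a, b, c the sizes i - p, j - p, t - p of the regions lying in exactly two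
   of the sets and k = m - p, a quadruple with a + b + c <= k is sent to (p, a, b, c);
   otherwise, with excess e = a + b + c - k > 0, it is sent to e - 1 followed by
   the sizes k - b - c, k - a - c, k - a - b of the regions lying in exactly one
   set.  The two images are separated by the test of [tuple_to_quad]. *)
Definition quad_to_tuple (q : quad) : 4.-tuple 'I_m.+1 :=
  let: (i, j, t, p) := q in
  let a := i - p in let b := j - p in let c := t - p in let k := m - p in
  if a + b + c <= k then [tuple inord p; inord a; inord b; inord c]
  else [tuple inord (a + b + c - k).-1; inord (k - b - c); inord (k - a - c); inord (k - a - b)].

Definition tuple_to_quad (u : 4.-tuple 'I_m.+1) : quad :=
  let v := map val u in
  let u0 := nth 0 v 0 in let u1 := nth 0 v 1 in let u2 := nth 0 v 2 in let u3 := nth 0 v 3 in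
  if m <= 2 * u0 + u1 + u2 + u3 + 1 then
    (inord (u0 + u1), inord (u0 + u2), inord (u0 + u3), inord u0)
  else
    let p := m - (2 * u0 + u1 + u2 + u3 + 2) in
    (inord (p + u0.+1 + u1), inord (p + u0.+1 + u2), inord (p + u0.+1 + u3), inord p).

Ltac inordK_lia := repeat match goal with
  | |- context [nat_of_ord (@inord ?n ?x)] => rewrite (@inordK n x); [|lia] end.

Lemma mem_quad_to_tuple q : q \in Imset m -> quad_to_tuple q \in bounded_tuples.
Proof.
case: q => [[[i j] t] p]; rewrite mem_Imset /venn_cond /= => cond.
by rewrite inE; case: ifP => case1; rewrite !big_cons big_nil; inordK_lia; lia.
Qed.

Lemma mem_tuple_to_quad u : u \in bounded_tuples -> tuple_to_quad u \in Imset m.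
Proof.
have [u0 [u1 [u2 [u3 ->]]]] := tuple4P u; rewrite inE !big_cons big_nil => sum_le.
rewrite /tuple_to_quad /=; case: ifP => case1; rewrite mem_Imset /venn_cond /=; inordK_lia; lia.
Qed.

Lemma quad_to_tupleK : {in Imset m, cancel quad_to_tuple tuple_to_quad}.
Proof.
case=> [[[i j] t] p]; rewrite mem_Imset /venn_cond /= => cond.
case: ifP => case1; rewrite /tuple_to_quad /=; inordK_lia; case: ifP => case2;
  by congr (_, _, _, _); apply: val_inj; rewrite /=; inordK_lia; lia.
Qed.

Lemma tuple_to_quadK : {in bounded_tuples, cancel tuple_to_quad quad_to_tuple}.
Proof.
move=> u; have [u0 [u1 [u2 [u3 ->]]]] := tuple4P u; rewrite inE !big_cons big_nil => sum_le.
rewrite /tuple_to_quad /=; case: ifP => case1; rewrite /quad_to_tuple /=; inordK_lia;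
  case: ifP => case2; apply: val_inj; congr [:: _; _; _; _]; apply: val_inj; rewrite /=;
  inordK_lia; lia.
Qed.

Lemma card_Imset : #|Imset m| = 'C(m + 4, 4).
Proof.
rewrite addnC -card_partial_ord_partitions -/bounded_tuples.
rewrite -(card_in_imset (can_in_inj quad_to_tupleK)); apply: eq_card => u.
apply/imsetP/idP => [[q Iq ->]|Bu]; first exact: mem_quad_to_tuple.
by exists (tuple_to_quad u); [exact: mem_tuple_to_quad | rewrite tuple_to_quadK].
Qed.

End Counting.

Theorem proposition3p1 (m : nat) (hm : (1 <= m)%N) :
  (forall i j t p : int, in_Im m i j t p <-> Icond m i j t p) /\
  #|Imset m| = 'C(m + 4, 4).
Proof. (* [hm] is not needed: the case m = 0 holds as well. *)
by split; [exact: in_Im_Icond | exact: card_Imset].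
Qed.
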